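(* Every weakly CIS graph is $\cap$-weakly triangle.
   Context: A family $\mathcal C$ of maximal cliques is edge covering if every two adjacent vertices lie in a common member; a family $\mathcal S$ of maximal stable sets is non-edge covering if every two distinct non-adjacent vertices lie in a common member. A graph is weakly CIS if there are an edge covering family $\mathcal C$ of maximal cliques and a non-edge covering family $\mathcal S$ of maximal stable sets with $C\cap S\neq\emptyset$ for all $C\in\mathcal C$, $S\in\mathcal S$. A graph $G$ is weakly triangle if there is a non-edge covering family $\mathcal S$ of maximal stable sets of $G$ such that for every $S\in\mathcal S$ and every pair of adjacent vertices $u,v\in V(G)\setminus S$, $u$ and $v$ have a common neighbor in $S$. A graph is $\cap$-weakly triangle if both it and its complement are weakly triangle. *)

(* A finite simple graph is a symmetric irreflexive relation
   adj : rel T on a finite vertex type T. *)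
From mathcomp Require Import all_boot.
Set Implicit Arguments. Unset Strict Implicit. Unset Printing Implicit Defensive.

Section Graphs.
Variable T : finType.

Definition compl_adj (adj : rel T) : rel T := fun u v => (u != v) && ~~ adj u v.

Definition is_clique (adj : rel T) (C : {set T}) : bool :=
  [forall u in C, forall v in C, (u != v) ==> adj u v].

Definition is_stable (adj : rel T) (S : {set T}) : bool :=
  [forall u in S, forall v in S, ~~ adj u v].

Definition maximal_clique (adj : rel T) (C : {set T}) : bool :=
  maxset (is_clique adj) C.

Definition maximal_stable (adj : rel T) (S : {set T}) : bool :=
  maxset (is_stable adj) S.

Definition edge_covering (adj : rel T) (F : {set {set T}}) : Prop :=
  forall u v, adj u v -> exists2 C, C \in F & (u \in C) && (v \in C).

Definition non_edge_covering (adj : rel T) (F : {set {set T}}) : Prop :=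
  forall u v, u != v -> ~~ adj u v -> exists2 S, S \in F & (u \in S) && (v \in S).

Definition weakly_CIS (adj : rel T) : Prop :=
  exists (FC FS : {set {set T}}),
    [/\ (forall C, C \in FC -> maximal_clique adj C),
        edge_covering adj FC,
        (forall S, S \in FS -> maximal_stable adj S),
        non_edge_covering adj FS &
        (forall C S, C \in FC -> S \in FS -> C :&: S != set0)].

Definition weakly_triangle (adj : rel T) : Prop :=
  exists FS : {set {set T}},
    [/\ (forall S, S \in FS -> maximal_stable adj S),
        non_edge_covering adj FS &
        (forall S u v, S \in FS -> u \notin S -> v \notin S -> adj u v ->
           exists2 w, w \in S & adj u w && adj v w)].

Definition cap_weakly_triangle (adj : rel T) : Prop :=
  weakly_triangle adj /\ weakly_triangle (compl_adj adj).

End Graphs.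

(* In a weakly CIS graph every member S of the stable family meets every
   member C of the clique family.  If u, v are adjacent and outside S, a
   clique C of the family contains both, and any w in C :&: S is a common
   neighbour of u and v in S; so the stable family witnesses that the graph
   is weakly triangle.  Complementation swaps cliques and stable sets, so the
   complement is weakly CIS too and the same argument applies to it. *)
From mathcomp Require Import all_boot.

Set Implicit Arguments.
Unset Strict Implicit.
Unset Printing Implicit Defensive.

Section CliqueStable.
Variables (T : finType) (adj : rel T).

Lemma cliqueP (C : {set T}) :
  reflect {in C &, forall u v, u != v -> adj u v} (is_clique adj C).
Proof.
apply: (iffP forallP) => [cl u v uC vC | cl u].
  by have /implyP/(_ uC)/forallP/(_ v)/implyP/(_ vC)/implyP := cl u.
by apply/implyP=> uC; apply/forallP=> v; apply/implyP=> vC; apply/implyP; exact: cl.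
Qed.

Lemma stableP (S : {set T}) :
  reflect {in S &, forall u v, ~~ adj u v} (is_stable adj S).
Proof.
apply: (iffP forallP) => [st u v uS vS | st u].
  by have /implyP/(_ uS)/forallP/(_ v)/implyP/(_ vS) := st u.
by apply/implyP=> uS; apply/forallP=> v; apply/implyP=> vS; exact: st.
Qed.

End CliqueStable.

Section Complement.
Variables (T : finType) (adj : rel T).

Lemma clique_compl : is_clique adj =1 is_stable (compl_adj adj).
Proof.
move=> C; apply/cliqueP/stableP => cl u v uC vC; rewrite /compl_adj.
  by rewrite negb_and negbK; case: (eqVneq u v) => [// | uv]; rewrite cl ?orbT.
by move=> uv; move: (cl u v uC vC); rewrite /compl_adj uv negbK.
Qed.

(* Stable sets contain no loops, which is why irreflexivity is needed here. *)
Lemma stable_compl : irreflexive adj -> is_stable adj =1 is_clique (compl_adj adj).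
Proof.
move=> irr S; apply/stableP/cliqueP => st u v uS vS.
  by move=> uv; rewrite /compl_adj uv st.
by case: (eqVneq u v) => [-> | uv]; [rewrite irr | case/andP: (st u v uS vS uv)].
Qed.

Lemma weakly_CIS_compl : irreflexive adj -> weakly_CIS adj -> weakly_CIS (compl_adj adj).
Proof.
move=> irr [FC [FS [maxC coverC maxS coverS meet]]].
exists FS, FC; split.
- by move=> S /maxS; rewrite /maximal_clique -(maxset_eq _ (stable_compl irr)).
- by move=> u v /andP [uv nuv]; exact: coverS.
- by move=> C /maxC; rewrite /maximal_stable -(maxset_eq _ clique_compl).
- by move=> u v uv; rewrite /compl_adj uv negbK; exact: coverC.
- by move=> S C SF CF; rewrite setIC; exact: meet.
Qed.

End Complement.

Lemma weakly_CIS_triangle (T : finType) (adj : rel T) :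
  weakly_CIS adj -> weakly_triangle adj.
Proof.
case=> FC [FS [maxC coverC maxS coverS meet]]; exists FS; split=> // S u v SF uS vS uv.
have [C CF /andP [uC vC]] := coverC u v uv.
have /set0Pn [w /setIP [wC wS]] := meet C S CF SF.
have /maxsetp /cliqueP cl := maxC C CF.
exists w => //; apply/andP; split; apply: cl => //.
  by apply: contraNneq uS => ->.
by apply: contraNneq vS => ->.
Qed.

Theorem proposition20 (T : finType) (adj : rel T)
  (adj_sym : symmetric adj) (adj_irr : irreflexive adj) :
  weakly_CIS adj -> cap_weakly_triangle adj.
Proof.
move=> cis; split; apply: weakly_CIS_triangle => //.
exact: weakly_CIS_compl.
Qed.
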